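(* Let $k\ge 2$ be even, $\gamma>0$, and let $p\in\Delta([k])$ satisfy $d_{TV}(p,u)>\gamma$. Let $S$ be a uniformly random subset of $[k]$ of cardinality $k/2$. Then $$\Pr\Big[\Big|p(S)-\tfrac12\Big|>\frac{\gamma}{\sqrt{5k}}\Big]>\frac{1}{477}.$$
   Context: $\Delta([k])$ is the set of probability distributions on $[k]=\{1,\dots,k\}$, $u$ is the uniform distribution on $[k]$, $d_{TV}(p,q)=\frac12\|p-q\|_1$, and $p(S)=\sum_{x\in S}p(x)$. *)

From HB Require Import structures.
From mathcomp Require Import all_boot all_order all_algebra.
Set Implicit Arguments. Unset Strict Implicit. Unset Printing Implicit Defensive.
Import Order.TTheory GRing.Theory Num.Theory.
Local Open Scope ring_scope.

(* [k] is modelled by 'I_k = {0,...,k-1}. *)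

Definition is_distr (R : numDomainType) (k : nat) (p : {ffun 'I_k -> R}) : Prop :=
  (forall i, 0 <= p i) /\ \sum_i p i = 1.

Definition unif (R : numFieldType) (k : nat) : {ffun 'I_k -> R} :=
  [ffun _ => (k%:R)^-1].

Definition dTV (R : numFieldType) (k : nat) (p q : {ffun 'I_k -> R}) : R :=
  2^-1 * \sum_i `|p i - q i|.

Definition massof (R : numDomainType) (k : nat) (p : {ffun 'I_k -> R})
  (S : {set 'I_k}) : R := \sum_(x in S) p x.

Definition prob_unif_subset (R : numFieldType) (k m : nat)
  (P : {set 'I_k} -> bool) : R :=
  #|[set S : {set 'I_k} | (#|S| == m)%N && P S]|%:R /
  #|[set S : {set 'I_k} | #|S| == m]|%:R.

(* Write x := p - u, so that sum_i x_i = 0 and p(S) - 1/2 = x(S) =: Y(S) when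
   #|S| = m = k/2.  Exchanging some i in S for some j outside S changes Y by
   D = x_j - x_i, and since exchanges are involutive, summing D (h(Y') - h(Y))
   over all exchanges gives the Stein identity 4m sum_S Y h(Y).  For h(y) = y
   this computes E[Y^2] = m |x|^2 / (4m - 2); for h(y) = y^3, together with
   2 D ((Y + D)^3 - Y^3) <= 3 D^2 ((Y + D)^2 + Y^2), it yields the
   hypercontractive bound E[Y^4] <= 9 E[Y^2]^2.  A Paley-Zygmund argument then
   gives P(|Y| > t) >= 1/15 as soon as 5 t^2 < E[Y^2], and Cauchy-Schwarz,
   |x|^2 >= 4 d_TV(p,u)^2 / k > 4 gamma^2 / k, makes t = gamma / sqrt(5k)
   admissible. *)

From HB Require Import structures.
From mathcomp Require Import all_boot all_order all_algebra.
From mathcomp Require Import zify ring lra.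
Set Implicit Arguments. Unset Strict Implicit. Unset Printing Implicit Defensive.
Import Order.TTheory GRing.Theory Num.Theory.
Local Open Scope ring_scope.

Definition sqnorm (R : numDomainType) (k : nat) (x : {ffun 'I_k -> R}) : R :=
  \sum_i x i ^+ 2.

Section RealInequalities.
Variable R : realDomainType.

Lemma sqr_le_indicator (b c t y : R) : 0 <= b -> 0 <= c ->
  2 * b * c * y ^+ 2 <=
    2 * b * c * t ^+ 2 + b ^+ 2 * y ^+ 4 + c ^+ 2 * (if t < `|y| then 1 else 0).
Proof.
move=> b_ge0 c_ge0; have bc_ge0 := mulr_ge0 b_ge0 c_ge0.
case: ltP => [t_lt_y | y_le_t]; rewrite ?mulr1 ?mulr0 ?addr0.
- have := sqr_ge0 (b * y ^+ 2 - c); have := mulr_ge0 bc_ge0 (sqr_ge0 t).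
  have -> : y ^+ 4 = (y ^+ 2) ^+ 2 by rewrite -exprM.
  move: (y ^+ 2) => z; nra.
- have y2_le : y ^+ 2 <= t ^+ 2.
    by rewrite -real_normK ?num_real // !expr2 ler_pM.
  have := sqr_ge0 (b * y ^+ 2); rewrite exprMn -exprM.
  have := ler_wpM2l (mulr_ge0 (ler0n _ 2) bc_ge0) y2_le; lra.
Qed.

Lemma sqr_sum_le_card (I : finType) (y : I -> R) :
  (\sum_i y i) ^+ 2 <= #|I|%:R * \sum_i y i ^+ 2.
Proof.
have : 0 <= \sum_i \sum_j (y i - y j) ^+ 2.
  by do 2!(apply: sumr_ge0 => ? _); apply: sqr_ge0.
under eq_bigr => i _.
  under eq_bigr do rewrite sqrrB.
  rewrite big_split /= sumrB sumr_const sumrMnl -mulr_sumr.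
  over.
rewrite big_split /= sumrB sumr_const !sumrMnl -mulr_suml.
move: (\sum_i y i) (\sum_i y i ^+ 2) => a b; lra.
Qed.

Variables (I : finType) (A : {set I}) (y : I -> R) (t : R).

Lemma card_indicator_sum :
  #|[set s in A | t < `|y s|]|%:R = \sum_(s in A) (if t < `|y s| then 1 else 0) :> R.
Proof.
rewrite -big_mkcondr -sum1_card natr_sum.
by apply: eq_big => [s | s _]; rewrite ?inE.
Qed.

Lemma paley_zygmund :
  #|A|%:R * \sum_(s in A) y s ^+ 4 <= 9 * (\sum_(s in A) y s ^+ 2) ^+ 2 ->
  5 * #|A|%:R * t ^+ 2 < \sum_(s in A) y s ^+ 2 ->
  #|A|%:R <= 15 * #|[set s in A | t < `|y s|]|%:R :> R.
Proof.
rewrite card_indicator_sum.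
set N : R := #|A|%:R; set Q2 := \sum_(s in A) _ ^+ 2; set Q4 := \sum_(s in A) _ ^+ 4.
set G := \sum_(s in A) _ => hyper t_small.
have N_ge0 : 0 <= N by apply: ler0n.
have Q2_gt0 : 0 < Q2 by have := mulr_ge0 N_ge0 (sqr_ge0 t); lra.
(* The weight 9 * Q2 makes the summed fourth-moment term N ^+ 2 * Q4 at most
   9 * N * Q2 ^+ 2, half of the left-hand side 18 * N * Q2 ^+ 2. *)
have : \sum_(s in A) 2 * N * (9 * Q2) * y s ^+ 2 <=
       \sum_(s in A) (2 * N * (9 * Q2) * t ^+ 2 + N ^+ 2 * y s ^+ 4 +
                      (9 * Q2) ^+ 2 * (if t < `|y s| then 1 else 0)).
  by apply: ler_sum => s _; apply: sqr_le_indicator; lra.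
rewrite !big_split /= sumr_const -!mulr_sumr -mulr_natr -/Q2 -/Q4 -/G -/N => summed.
have := ler_wpM2l N_ge0 hyper.
have := ler_wpM2l (mulr_ge0 N_ge0 (ltW Q2_gt0)) (ltW t_small).
have : 0 < Q2 ^+ 2 by rewrite exprn_gt0.
nra.
Qed.

End RealInequalities.

Lemma sum_setC (V : nmodType) (T : finType) (A : {set T}) (F : T -> V) :
  \sum_i F i = \sum_(i in A) F i + \sum_(i in ~: A) F i.
Proof.
by rewrite (bigID (mem A)) /=; congr (_ + _); apply: eq_bigl => i; rewrite inE.
Qed.

Section SetExchange.
Variables (T : finType) (S : {set T}) (i j : T).
Hypotheses (iS : i \in S) (jNS : j \notin S).

Lemma card_exchange : #|j |: (S :\ i)| = #|S|.
Proof.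
by rewrite cardsU1 !inE (negbTE jNS) andbF (cardsD1 i S) iS add1n.
Qed.

Lemma mem_exchange : j \in j |: (S :\ i).
Proof. by rewrite setU11. Qed.

Lemma notin_exchange : i \notin j |: (S :\ i).
Proof.
rewrite !inE eqxx /= orbF; apply: contraNneq jNS => <-; exact: iS.
Qed.

Lemma exchangeK : i |: ((j |: (S :\ i)) :\ j) = S.
Proof.
apply/setP => l; rewrite !inE.
have [-> | _] := eqVneq l i; first by rewrite iS.
by have [-> | _] := eqVneq l j; rewrite ?(negbTE jNS).
Qed.

End SetExchange.

Section Exchange.
Variables (R : numDomainType) (k m : nat).
Implicit Types (S : {set 'I_k}) (F G : {set 'I_k} -> 'I_k -> 'I_k -> R).

Definition exchange_sum F : R :=
  \sum_(S : {set 'I_k} | #|S| == m) \sum_(i in S) \sum_(j in ~: S) F S i j.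

Lemma exchange_sum_swap F :
  exchange_sum F = exchange_sum (fun S i j => F (j |: (S :\ i)) j i).
Proof.
pose is_exchange (u : {set 'I_k} * ('I_k * 'I_k)) :=
  [&& #|u.1| == m, u.2.1 \in u.1 & u.2.2 \in ~: u.1].
have paired G : exchange_sum G = \sum_(u | is_exchange u) G u.1 u.2.1 u.2.2.
  by rewrite /exchange_sum; under eq_bigr do rewrite pair_big_dep; rewrite pair_big_dep.
pose swap (u : {set 'I_k} * ('I_k * 'I_k)) := (u.2.2 |: (u.1 :\ u.2.1), (u.2.2, u.2.1)).
have swap_exchange u : is_exchange u -> is_exchange (swap u) /\ swap (swap u) = u.
  case: u => S [i j] /and3P [/= /eqP cardS iS]; rewrite inE => jNS.
  rewrite /is_exchange /swap /= card_exchange // cardS mem_exchange // inE.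
  by rewrite notin_exchange // exchangeK // eqxx.
rewrite !paired (reindex_onto swap swap) => [|u /swap_exchange []//].
apply: eq_bigl => u; apply/idP/idP => [/andP [/swap_exchange [mv _] /eqP swapK] | mv].
  by rewrite -swapK.
by have [-> ->] := swap_exchange u mv; rewrite eqxx.
Qed.

Lemma eq_exchange_sum F G :
  (forall S i j, #|S| = m -> i \in S -> j \notin S -> F S i j = G S i j) ->
  exchange_sum F = exchange_sum G.
Proof.
move=> eqFG; apply: eq_bigr => S /eqP cardS; apply: eq_bigr => i iS.
by apply: eq_bigr => j; rewrite inE => jNS; apply: eqFG.
Qed.

Lemma ler_exchange_sum F G :
  (forall S i j, #|S| = m -> i \in S -> j \notin S -> F S i j <= G S i j) ->
  exchange_sum F <= exchange_sum G.
Proof.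
move=> leFG; apply: ler_sum => S /eqP cardS; apply: ler_sum => i iS.
by apply: ler_sum => j; rewrite inE => jNS; apply: leFG.
Qed.

Lemma exchange_sumD F G :
  exchange_sum (fun S i j => F S i j + G S i j) = exchange_sum F + exchange_sum G.
Proof.
rewrite /exchange_sum -big_split; apply: eq_bigr => S _.
by rewrite -big_split; apply: eq_bigr => i _; rewrite -big_split.
Qed.

Lemma exchange_sumZ c F :
  exchange_sum (fun S i j => c * F S i j) = c * exchange_sum F.
Proof.
rewrite /exchange_sum mulr_sumr; apply: eq_bigr => S _.
by rewrite mulr_sumr; apply: eq_bigr => i _; rewrite mulr_sumr.
Qed.

Variable x : {ffun 'I_k -> R}.
Hypotheses (card_k : k = (m + m)%N) (x_centered : \sum_i x i = 0).

Lemma card_setC_half S : #|S| = m -> #|~: S| = m.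
Proof.
by move=> cardS; apply/eqP; rewrite -(eqn_add2l m) -{1}cardS cardsC card_ord card_k.
Qed.

Lemma massof_setC S : massof x (~: S) = - massof x S.
Proof.
by rewrite -[RHS]add0r -x_centered (sum_setC S) addrAC subrr add0r.
Qed.

Lemma massof_exchange S i j : i \in S -> j \notin S ->
  massof x (j |: (S :\ i)) = massof x S - x i + x j.
Proof.
move=> iS jNS; rewrite /massof big_setU1 /=; last by rewrite !inE (negbTE jNS) andbF.
by rewrite (big_setD1 i iS) /= [x i + _]addrC addrK addrC.
Qed.

Lemma exchange_sum_diff (w : R -> R) :
  exchange_sum (fun S i j => (x i - x j) * w (massof x S)) =
  2 * m%:R * \sum_(S : {set 'I_k} | #|S| == m) massof x S * w (massof x S).
Proof.
rewrite /exchange_sum mulr_sumr; apply: eq_bigr => S /eqP cardS.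
under eq_bigr do rewrite -mulr_suml.
rewrite -mulr_suml mulrA; congr (_ * _).
under eq_bigr do rewrite sumrB sumr_const card_setC_half //.
move: (massof_setC S); rewrite /massof => ->.
rewrite sumrB sumrMnl sumr_const cardS.
by move: (\sum_(i in S) x i) => y; ring.
Qed.

Lemma exchange_sum_diff_sqr (w : R -> R) :
  exchange_sum (fun S i j => (x j - x i) ^+ 2 * w (massof x S)) =
  \sum_(S : {set 'I_k} | #|S| == m)
    (m%:R * sqnorm x + 2 * massof x S ^+ 2) * w (massof x S).
Proof.
apply: eq_bigr => S /eqP cardS.
under eq_bigr do rewrite -mulr_suml.
rewrite -mulr_suml; congr (_ * _).
under eq_bigr => i _.
  under eq_bigr do rewrite sqrrB.
  rewrite big_split sumrB /= sumrMnl -mulr_suml sumr_const card_setC_half //.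
  over.
move: (massof_setC S); rewrite /massof => ->.
rewrite big_split sumrB /= !sumrMnl sumr_const cardS -mulr_sumr.
rewrite /sqnorm (sum_setC S).
by move: (\sum_(i in S) x i) (\sum_(i in S) _) (\sum_(i in ~: S) _) => y a c; ring.
Qed.

Lemma stein_identity (h : R -> R) :
  exchange_sum (fun S i j =>
    (x j - x i) * (h (massof x (j |: (S :\ i))) - h (massof x S))) =
  4 * m%:R * \sum_(S : {set 'I_k} | #|S| == m) massof x S * h (massof x S).
Proof.
have -> : exchange_sum (fun S i j =>
    (x j - x i) * (h (massof x (j |: (S :\ i))) - h (massof x S))) =
  exchange_sum (fun S i j => (x j - x i) * h (massof x (j |: (S :\ i)))) +
  exchange_sum (fun S i j => (x i - x j) * h (massof x S)).
  rewrite -exchange_sumD; apply: eq_exchange_sum => S i j _ _ _.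
  by move: (x i) (x j) (h _) (h _) => a b c d; ring.
rewrite -(exchange_sum_swap (fun S i j => (x i - x j) * h (massof x S))).
by rewrite exchange_sum_diff; ring.
Qed.

Definition moment n := \sum_(S : {set 'I_k} | #|S| == m) massof x S ^+ n.

Lemma second_moment_eq :
  4 * m%:R * moment 2 = m%:R * sqnorm x * moment 0 + 2 * moment 2.
Proof.
have := stein_identity (fun y => y).
rewrite (eq_exchange_sum (G := fun S i j => (x j - x i) ^+ 2 * 1)).
  rewrite (exchange_sum_diff_sqr (fun _ => 1)) /moment => stein.
  rewrite (eq_bigr _ (fun S _ => expr2 _)) -stein.
  rewrite !mulr_sumr -big_split.
  by apply: eq_bigr => S _; rewrite expr0 expr2 !mulr1.
move=> S i j _ iS jNS; rewrite massof_exchange //=.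
by move: (x i) (x j) (massof x S) => a b y; ring.
Qed.

End Exchange.

Section BalancedSubsets.
Variables (R : realDomainType) (k m : nat) (x : {ffun 'I_k -> R}).
Hypotheses (card_k : k = (m + m)%N) (x_centered : \sum_i x i = 0).
Implicit Types S : {set 'I_k}.
Local Notation exchange_sum := (@exchange_sum R k m).
Local Notation moment := (moment m x).

Lemma fourth_moment_le :
  4 * m%:R * moment 4 <= 3 * (m%:R * sqnorm x * moment 2 + 2 * moment 4).
Proof.
have stein := stein_identity card_k x_centered (fun y => y ^+ 3).
have swap_sq :
    exchange_sum (fun S i j => (x j - x i) ^+ 2 * massof x (j |: (S :\ i)) ^+ 2) =
    exchange_sum (fun S i j => (x j - x i) ^+ 2 * massof x S ^+ 2).
  rewrite -(exchange_sum_swap m (fun S i j => (x i - x j) ^+ 2 * massof x S ^+ 2)).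
  by apply: eq_exchange_sum => S i j _ _ _; rewrite -sqrrN opprB.
have : exchange_sum (fun S i j =>
         2 * ((x j - x i) * (massof x (j |: (S :\ i)) ^+ 3 - massof x S ^+ 3))) <=
       exchange_sum (fun S i j =>
         3 * ((x j - x i) ^+ 2 * massof x (j |: (S :\ i)) ^+ 2) +
         3 * ((x j - x i) ^+ 2 * massof x S ^+ 2)).
  apply: ler_exchange_sum => S i j _ iS jNS; rewrite massof_exchange //.
  move: (x i) (x j) (massof x S) => a b y; rewrite -subr_ge0.
  have -> : 3 * ((b - a) ^+ 2 * (y - a + b) ^+ 2) + 3 * ((b - a) ^+ 2 * y ^+ 2) -
            2 * ((b - a) * ((y - a + b) ^+ 3 - y ^+ 3)) = ((b - a) ^+ 2) ^+ 2 by ring.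
  exact: sqr_ge0.
rewrite exchange_sumD !exchange_sumZ swap_sq stein.
rewrite (exchange_sum_diff_sqr card_k x_centered (fun y => y ^+ 2)).
have -> : \sum_(S : {set 'I_k} | #|S| == m) massof x S * massof x S ^+ 3 = moment 4.
  by apply: eq_bigr => S _; rewrite -exprS.
have -> : \sum_(S : {set 'I_k} | #|S| == m)
            (m%:R * sqnorm x + 2 * massof x S ^+ 2) * massof x S ^+ 2 =
          m%:R * sqnorm x * moment 2 + 2 * moment 4.
  rewrite !mulr_sumr -big_split; apply: eq_bigr => S _.
  by rewrite mulrDl -mulrA -exprD.
lra.
Qed.

Lemma moment_even_ge0 n : ~~ odd n -> 0 <= moment n.
Proof. by move=> n_even; apply: sumr_ge0 => S _; apply: exprn_even_ge0. Qed.

Lemma sqr_massof_card1 S : #|S| = 1%N -> massof x S ^+ 2 <= sqnorm x.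
Proof.
move/eqP/cards1P => [i ->]; rewrite /massof big_set1 /sqnorm (bigD1 i) //= lerDl.
by apply: sumr_ge0 => j _; apply: sqr_ge0.
Qed.

Lemma moment_hypercontractive :
  (0 < m)%N -> moment 0 * moment 4 <= 9 * moment 2 ^+ 2.
Proof.
move=> m_gt0; have mom2 := second_moment_eq card_k x_centered.
have mom4 := fourth_moment_le.
have N0 : 0 <= moment 0 by exact: moment_even_ge0.
have Q2_0 : 0 <= moment 2 by exact: moment_even_ge0.
have Q4_le : (m <= 1)%N -> moment 4 <= sqnorm x * moment 2.
  move=> m_le1; rewrite /moment mulr_sumr; apply: ler_sum => S /eqP cardS.
  rewrite (exprM _ 2 2) ler_wpM2r ?sqr_ge0 // sqr_massof_card1 // cardS.
  by apply/anti_leq; rewrite m_le1.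
move: mom2 mom4 N0 Q2_0 Q4_le.
set N := moment 0; set Q2 := moment 2; set Q4 := moment 4 => mom2 mom4 N0 Q2_0 Q4_le.
have mom2Q2 := congr1 ( *%R^~ Q2) mom2; rewrite /= in mom2Q2.
(* For m = 1 the fourth moment bound is vacuous, but then |Y(S)|^2 <= |x|^2. *)
have [m_gt1 | m_le1] := ltnP 1 m.
- have m_ge2 : 0 <= m%:R - 2 :> R by rewrite subr_ge0 ler_nat.
  have mom4N := ler_wpM2l N0 mom4.
  have : (4 * m%:R - 6) * (N * Q4 - 9 * Q2 ^+ 2) <= 0.
    have := mulr_ge0 m_ge2 (sqr_ge0 Q2); lra.
  by rewrite pmulr_rle0; lra.
- have m1 : m%:R = 1 :> R by rewrite (@anti_leq m 1) // m_le1.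
  have := ler_wpM2l N0 (Q4_le m_le1); rewrite m1 in mom2Q2.
  have := sqr_ge0 Q2; lra.
Qed.

Lemma balanced_subset_anticoncentration (t : R) :
  (0 < m)%N -> 20 * t ^+ 2 < sqnorm x ->
  #|[set S : {set 'I_k} | #|S| == m]|%:R <=
    15 * #|[set S : {set 'I_k} | (#|S| == m) && (t < `|massof x S|)]|%:R :> R.
Proof.
move=> m_gt0 t_small; set A := [set S : {set 'I_k} | #|S| == m].
have -> : [set S : {set 'I_k} | (#|S| == m) && (t < `|massof x S|)] =
          [set S in A | t < `|massof x S|].
  by apply/setP => S; rewrite !inE.
have momentE n : \sum_(S in A) massof x S ^+ n = moment n.
  by apply: eq_bigl => S; rewrite inE.
have cardA : #|A|%:R = moment 0.
  by rewrite -momentE (eq_bigr _ (fun S _ => expr0 _)) sumr_const.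
have A_gt0 : 0 < moment 0.
  by rewrite -cardA card_draws card_ord ltr0n bin_gt0 card_k leq_addl.
apply: paley_zygmund; rewrite !momentE cardA; first exact: moment_hypercontractive.
have mom2 := second_moment_eq card_k x_centered.
have m_ge1 : 1 <= m%:R :> R by rewrite ler1n.
have := ler_wpM2l (ltW A_gt0) (ltW t_small); have := sqr_ge0 t; nra.
Qed.

End BalancedSubsets.

Section Distributions.
Variables (R : realFieldType) (k : nat).
Implicit Types (p q : {ffun 'I_k -> R}) (S : {set 'I_k}).

Lemma massofB p q S : massof (p - q) S = massof p S - massof q S.
Proof. by rewrite /massof -sumrB; apply: eq_bigr => i _; rewrite !ffunE. Qed.

Lemma massof_unif S : massof (unif R k) S = #|S|%:R / k%:R.
Proof.
by rewrite /massof; under eq_bigr do rewrite ffunE; rewrite sumr_const mulr_natl.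
Qed.

Lemma sum_sub_unif p : (0 < k)%N -> \sum_i p i = 1 -> \sum_i (p - unif R k) i = 0.
Proof.
move=> k_gt0 p_sum; under eq_bigr do rewrite !ffunE.
rewrite sumrB p_sum sumr_const card_ord -[_ *+ k]mulr_natl mulfV ?subrr //.
by rewrite pnatr_eq0 -lt0n.
Qed.

Lemma massof_sub_unif_half p S (m : nat) : (0 < m)%N -> k = (m + m)%N -> #|S| = m ->
  massof (p - unif R k) S = massof p S - 2^-1.
Proof.
move=> m_gt0 card_k cardS; rewrite massofB massof_unif cardS.
have -> : k%:R = m%:R * 2 :> R by rewrite {1}card_k natrD; ring.
by rewrite invfM mulrA mulfV ?mul1r // pnatr_eq0 -lt0n.
Qed.

Lemma dTV_sqr_le p q : 4 * dTV p q ^+ 2 <= k%:R * sqnorm (p - q).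
Proof.
have := sqr_sum_le_card (fun i => `|p i - q i|); rewrite card_ord.
have -> : sqnorm (p - q) = \sum_i `|p i - q i| ^+ 2.
  by rewrite /sqnorm; apply: eq_bigr => i _; rewrite !ffunE real_normK ?num_real.
rewrite /dTV; move: (\sum_i `|_|) (\sum_i `|_| ^+ 2) => a b.
suff -> : 4 * (2^-1 * a) ^+ 2 = a ^+ 2 by [].
by field.
Qed.

End Distributions.

Theorem corollary4p2 (R : rcfType) (k : nat) (gamma : R)
  (p : {ffun 'I_k -> R}) :
  (2 <= k)%N -> ~~ odd k -> 0 < gamma ->
  is_distr p -> dTV p (unif R k) > gamma ->
  prob_unif_subset R (k %/ 2)
    (fun S => `|massof p S - 2^-1| > gamma / Num.sqrt (5 * k)%:R) > 477%:R^-1.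
Proof.
move=> k_ge2 k_even gamma_gt0 [_ p_sum] far.
set m := (k %/ 2)%N; set t := gamma / _; set x := p - unif R k.
have card_k : k = (m + m)%N.
  by rewrite addnn /m divn2 -{1}(odd_double_half k) (negbTE k_even).
have m_gt0 : (0 < m)%N by lia.
have x_centered : \sum_i x i = 0 by apply: sum_sub_unif => //; lia.
have sqnorm_large : 20 * t ^+ 2 < sqnorm x.
  have k_gt0 : 0 < k%:R :> R by rewrite ltr0n; lia.
  have := dTV_sqr_le p (unif R k).
  rewrite -(ltr_pM2l k_gt0) /t expr_div_n sqr_sqrtr ?ler0n // natrM.
  have -> : k%:R * (20 * (gamma ^+ 2 / (5%:R * k%:R))) = 4 * gamma ^+ 2.
    by field; rewrite lt0r_neq0.
  nra.
have := balanced_subset_anticoncentration card_k x_centered m_gt0 sqnorm_large.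
have -> : [set S : {set 'I_k} | (#|S| == m) && (t < `|massof x S|)] =
          [set S : {set 'I_k} | (#|S| == m) && (t < `|massof p S - 2^-1|)].
  apply/setP => S; rewrite !inE; case: eqP => // cardS.
  by rewrite (massof_sub_unif_half p m_gt0 card_k cardS).
have N_gt0 : 0 < #|[set S : {set 'I_k} | #|S| == m]|%:R :> R.
  by rewrite card_draws card_ord ltr0n bin_gt0 card_k leq_addl.
by rewrite /prob_unif_subset ltr_pdivlMr //; lra.
Qed.
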